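(* Let $C,D$ be category presentations. The uncurrying functor $\overline{(-)}:\mathbf{Curr}(C,D)\to\mathbf{UnCurr}(C,D)$ takes values in curryable profunctor presentations and rightward morphisms. Its corestriction $\overline{(-)}:\mathbf{Curr}(C,D)\to\mathbf{Crble}(C,D)$ is an equivalence of categories, and when $C,D$ are finite so is its restriction $\overline{(-)}:\mathbf{FinCurr}(C,D)\to\mathbf{FinCrble}(C,D)$; both preserve and reflect provable equality of morphisms (i.e. $F\approx G$ iff $\overline F\approx\overline G$).
   Context: Category presentations $C$: sorts, function symbols $f:c\to c'$, equations $C_E$ between parallel paths; finite if all these sets are finite; provable equality is the smallest equivalence relation on paths containing the equations and closed under concatenation with composable function symbols. Uncurried presentations $P:C\nrightarrow D$: a set $\mathrm{Fun}(P)$ of symbols $x:c\to d$ ($c$ a $C$-sort, $d$ a $D$-sort) and a set $P_E$ of equations between cross-paths (paths from a $C$-sort to a $D$-sort) of the category presentation $|P|$ with sorts $\mathrm{Sort}(C)+\mathrm{Sort}(D)$, symbols $\mathrm{Fun}(C)+\mathrm{Fun}(P)+\mathrm{Fun}(D)$, equations $C_E+P_E+D_E$; $\approx_P$ is provable equality of $|P|$ restricted to cross-paths. Morphisms $F:P\to P'$ send each $x:c\to d$ to a cross-path $F(x):c\to d$ of $P'$ such that the extension acting as identity on $C$ and $D$ maps every equation of $|P|$ to a provable equality of $|P'|$; composition by substitution; category $\mathbf{UnCurr}(C,D)$; $F\approx F'$ iff $F(x)\approx_{P'}F'(x)$ for all $x$. A short left cross-path is $f.p$ with $f\in\mathrm{Fun}(C)$,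 $p\in\mathrm{Fun}(P)$; a right cross-path is $p.g$ with $p\in\mathrm{Fun}(P)$, $g$ a $D$-path. For a $C$-sort $c$, $P^c$ is the $D$-instance presentation with generators the symbols $p:c\to d$ of $P$ and equations those of $P_E$ with source $c$. $P$ is nongenerative if every short left cross-path is $\approx_P$-equal to a right cross-path, conservative if right cross-paths $t,t'$ from $c$ with $t\approx_P t'$ satisfy $t\approx_{P^c}t'$, and curryable if both. A morphism is rightward if it sends each symbol to a right cross-path. $\mathbf{Crble}(C,D)$ is the (non-full) subcategory of $\mathbf{UnCurr}(C,D)$ with curryable objects and rightward morphisms; $\mathbf{FinCrble}(C,D)$ its full subcategory on presentations with $\mathrm{Fun}(P)$, $P_E$ finite. Instance presentations: a $D$-instance presentation $I$ has generators $x:d$ and equations between terms $x.g$; $\approx_I$ is the smallest equivalence relation on terms containing $I_E$, closed under right concatenation with $D$-function symbols, identifying $t.g,t.g'$ for equations $g=g'$ of $D_E$. Morphisms $F:I\to J$ send generators $x:d$ to terms $F(x):d$ respecting equations up to $\approx_J$; $F(x.g):=F(x).g$; $F\approx G$ iff $F(x)\approx_J G(x)$. Curried presentations $P:C\nrightarrow D$: $D$-instance presentations $P(c)$ and $D$-instance morphisms $P(f):P(c')\to P(c)$ for $f:c\to c'$, with $P(p)\approx P(p')$ for equations $p=p'$ of $C_E$ ($P(f_1.\cdots.f_n):=P(f_n)\circ\cdots\circ P(f_1)$). Morphisms: families $F_c:P(c)\to P'(c)$ with $F_c\circ P(f)\approx P'(f)\circ F_{c'}$; $\mathbf{Curr}(C,D)$;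 $F\approx G$ iff all $F_c\approx G_c$; $\mathbf{FinCurr}(C,D)$ the full subcategory with all $P(c)$ finite. Uncurrying: $\overline P$ has a symbol $\overline p:c\to d$ for each $C$-sort $c$ and generator $p:d$ of $P(c)$; $\overline{p.g}:=\overline p.g$; equations $\overline t=\overline{t'}$ for each equation $t=t'$ of each $P(c)$, and $f.\overline p=\overline{P(f)(p)}$ for each $f:c\to c'$ in $\mathrm{Fun}(C)$ and generator $p$ of $P(c')$. On morphisms $\overline F(\overline p):=\overline{F_c(p)}$. *)

From Stdlib Require Import List.

Record csig := { Sort : Type; Fun : Type; src : Fun -> Sort; tgt : Fun -> Sort }.

(* typed paths, written in diagrammatic order: tcons f p = f.p *)
Inductive tpath (S : csig) : Sort S -> Sort S -> Type :=
| tnil : forall a, tpath S a a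
| tcons : forall (f : Fun S) b, tpath S (tgt S f) b -> tpath S (src S f) b.
Arguments tnil {S} a.
Arguments tcons {S} f {b} _.

Definition tsing {S : csig} (f : Fun S) : tpath S (src S f) (tgt S f) :=
  tcons f (tnil (tgt S f)).

Fixpoint tapp {S : csig} {a b c : Sort S} (p : tpath S a b) : tpath S b c -> tpath S a c :=
  match p in tpath _ a b return tpath S b c -> tpath S a c with
  | tnil _ => fun q => q
  | tcons f p' => fun q => tcons f (tapp p' q)
  end.

Record catpres := {
  csig_of :> csig;
  Eqn : Type;
  esrc : Eqn -> Sort csig_of;
  etgt : Eqn -> Sort csig_of;
  elhs : forall e, tpath csig_of (esrc e) (etgt e);
  erhs : forall e, tpath csig_of (esrc e) (etgt e) }.

Inductive peq (C : catpres) : forall a b : Sort C, tpath C a b -> tpath C a b -> Prop :=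
| peq_eqn : forall e, peq C _ _ (elhs C e) (erhs C e)
| peq_refl : forall a b (p : tpath C a b), peq C a b p p
| peq_sym : forall a b (p q : tpath C a b), peq C a b p q -> peq C a b q p
| peq_trans : forall a b (p q r : tpath C a b),
    peq C a b p q -> peq C a b q r -> peq C a b p r
| peq_pre : forall (f : Fun C) b (p q : tpath C (tgt C f) b),
    peq C _ b p q -> peq C _ b (tcons f p) (tcons f q)
| peq_post : forall (f : Fun C) a (p q : tpath C a (src C f)),
    peq C a _ p q -> peq C a _ (tapp p (tsing f)) (tapp q (tsing f)).
Arguments peq C {a b} _ _.

Definition finite_type (T : Type) : Prop := exists l : list T, forall x, In x l.

Definition finite_catpres (C : catpres) : Prop :=
  finite_type (Sort C) /\ finite_type (Fun C) /\ finite_type (Eqn C).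

(* a term x.g : d with x a generator and g a D-path *)
Definition term (D : csig) (G : Type) (gs : G -> Sort D) (d : Sort D) : Type :=
  { x : G & tpath D (gs x) d }.

Record instpres (D : catpres) := {
  IGen : Type;
  igs : IGen -> Sort D;
  IEqn : Type;
  iesort : IEqn -> Sort D;
  ilhs : forall e, term D IGen igs (iesort e);
  irhs : forall e, term D IGen igs (iesort e) }.
Arguments IGen {D} _.
Arguments igs {D} _ _.
Arguments IEqn {D} _.
Arguments iesort {D} _ _.
Arguments ilhs {D} _ _.
Arguments irhs {D} _ _.

Definition iterm {D : catpres} (I : instpres D) (d : Sort D) : Type :=
  term D (IGen I) (igs I) d.

Definition tconcat {D : catpres} {I : instpres D} {d d' : Sort D}
  (t : iterm I d) (g : tpath D d d') : iterm I d' :=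
  existT _ (projT1 t) (tapp (projT2 t) g).

Inductive ieq {D : catpres} (I : instpres D) : forall d : Sort D, iterm I d -> iterm I d -> Prop :=
| ieq_eqn : forall e, ieq I _ (ilhs I e) (irhs I e)
| ieq_refl : forall d (t : iterm I d), ieq I d t t
| ieq_sym : forall d (t u : iterm I d), ieq I d t u -> ieq I d u t
| ieq_trans : forall d (t u v : iterm I d), ieq I d t u -> ieq I d u v -> ieq I d t v
| ieq_post : forall (g : Fun D) (t u : iterm I (src D g)),
    ieq I _ t u -> ieq I _ (tconcat t (tsing g)) (tconcat u (tsing g))
| ieq_deq : forall (e : Eqn D) (t : iterm I (esrc D e)),
    ieq I _ (tconcat t (elhs D e)) (tconcat t (erhs D e)).
Arguments ieq {D} I {d} _ _.

Definition instmor {D : catpres} (I J : instpres D) : Type :=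
  forall x : IGen I, iterm J (igs I x).

Definition imap {D : catpres} {I J : instpres D} (F : instmor I J) {d : Sort D}
  (t : iterm I d) : iterm J d :=
  match t with existT _ x g => tconcat (F x) g end.

Definition instmor_valid {D : catpres} {I J : instpres D} (F : instmor I J) : Prop :=
  forall e : IEqn I, ieq J (imap F (ilhs I e)) (imap F (irhs I e)).

Definition instmor_eqv {D : catpres} {I J : instpres D} (F G : instmor I J) : Prop :=
  forall x : IGen I, ieq J (F x) (G x).

(* instmor_comp G F = G o F (first F, then G) *)
Definition instmor_comp {D : catpres} {I J K : instpres D}
  (G : instmor J K) (F : instmor I J) : instmor I K :=
  fun x => imap G (F x).

Definition instmor_id {D : catpres} (I : instpres D) : instmor I I :=
  fun x => existT _ x (tnil (igs I x)).

Definition finite_inst {D : catpres} (I : instpres D) : Prop :=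
  finite_type (IGen I) /\ finite_type (IEqn I).

Record curr (C D : catpres) := {
  Pc : Sort C -> instpres D;
  Pf : forall f : Fun C, instmor (Pc (tgt C f)) (Pc (src C f)) }.
Arguments Pc {C D} _ _.
Arguments Pf {C D} _ _.

Fixpoint Ppath {C D : catpres} (P : curr C D) {a b : Sort C} (p : tpath C a b)
  : instmor (Pc P b) (Pc P a) :=
  match p in tpath _ a b return instmor (Pc P b) (Pc P a) with
  | tnil a => instmor_id (Pc P a)
  | tcons f p' => instmor_comp (Pf P f) (Ppath P p')
  end.

Definition curr_valid {C D : catpres} (P : curr C D) : Prop :=
  (forall f : Fun C, instmor_valid (Pf P f)) /\
  (forall e : Eqn C, instmor_eqv (Ppath P (elhs C e)) (Ppath P (erhs C e))).

Definition currmor {C D : catpres} (P P' : curr C D) : Type :=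
  forall c : Sort C, instmor (Pc P c) (Pc P' c).

Definition currmor_valid {C D : catpres} {P P' : curr C D} (F : currmor P P') : Prop :=
  (forall c, instmor_valid (F c)) /\
  (forall f : Fun C,
     instmor_eqv (instmor_comp (F (src C f)) (Pf P f))
                 (instmor_comp (Pf P' f) (F (tgt C f)))).

Definition currmor_eqv {C D : catpres} {P P' : curr C D} (F G : currmor P P') : Prop :=
  forall c, instmor_eqv (F c) (G c).

Definition currmor_comp {C D : catpres} {P P' P'' : curr C D}
  (G : currmor P' P'') (F : currmor P P') : currmor P P'' :=
  fun c => instmor_comp (G c) (F c).

Definition currmor_id {C D : catpres} (P : curr C D) : currmor P P :=
  fun c => instmor_id (Pc P c).

Definition fin_curr {C D : catpres} (P : curr C D) : Prop :=
  forall c, finite_inst (Pc P c).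

Inductive tsort (C D : csig) := LS (c : Sort C) | RS (d : Sort D).
Arguments LS {C D} c.
Arguments RS {C D} d.

Inductive tsym (C D : csig) (X : Type) := SC (f : Fun C) | SP (x : X) | SD (g : Fun D).
Arguments SC {C D X} f.
Arguments SP {C D X} x.
Arguments SD {C D X} g.

Definition tsig (C D : csig) (X : Type) (xs : X -> Sort C) (xt : X -> Sort D) : csig :=
  {| Sort := tsort C D;
     Fun := tsym C D X;
     src := fun s => match s with
                     | SC f => LS (src C f) | SP x => LS (xs x) | SD g => RS (src D g) end;
     tgt := fun s => match s with
                     | SC f => LS (tgt C f) | SP x => RS (xt x) | SD g => RS (tgt D g) end |}.

Fixpoint liftC {C D : csig} {X : Type} {xs : X -> Sort C} {xt : X -> Sort D}
  {a b : Sort C} (p : tpath C a b) : tpath (tsig C D X xs xt) (LS a) (LS b) :=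
  match p in tpath _ a b return tpath (tsig C D X xs xt) (LS a) (LS b) with
  | tnil a => tnil (S := tsig C D X xs xt) (LS a)
  | tcons f p' => tcons (S := tsig C D X xs xt) (SC f) (liftC p')
  end.

Fixpoint liftD {C D : csig} {X : Type} {xs : X -> Sort C} {xt : X -> Sort D}
  {a b : Sort D} (p : tpath D a b) : tpath (tsig C D X xs xt) (RS a) (RS b) :=
  match p in tpath _ a b return tpath (tsig C D X xs xt) (RS a) (RS b) with
  | tnil a => tnil (S := tsig C D X xs xt) (RS a)
  | tcons f p' => tcons (S := tsig C D X xs xt) (SD f) (liftD p')
  end.

Record uncurr (C D : catpres) := {
  UFun : Type;
  usrc : UFun -> Sort C;
  utgt : UFun -> Sort D;
  UEqn : Type;
  uesrc : UEqn -> Sort C;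
  uetgt : UEqn -> Sort D;
  uelhs : forall e, tpath (tsig C D UFun usrc utgt) (LS (uesrc e)) (RS (uetgt e));
  uerhs : forall e, tpath (tsig C D UFun usrc utgt) (LS (uesrc e)) (RS (uetgt e)) }.
Arguments UFun {C D} _.
Arguments usrc {C D} _ _.
Arguments utgt {C D} _ _.
Arguments UEqn {C D} _.
Arguments uesrc {C D} _ _.
Arguments uetgt {C D} _ _.
Arguments uelhs {C D} _ _.
Arguments uerhs {C D} _ _.

Definition usig {C D : catpres} (P : uncurr C D) : csig :=
  tsig C D (UFun P) (usrc P) (utgt P).

Inductive teqn (C D : catpres) (E : Type) := TEC (e : Eqn C) | TEP (e : E) | TED (e : Eqn D).
Arguments TEC {C D E} e.
Arguments TEP {C D E} e.
Arguments TED {C D E} e.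

Definition total_esrc {C D : catpres} (P : uncurr C D) (e : teqn C D (UEqn P)) : tsort C D :=
  match e with TEC e => LS (esrc C e) | TEP e => LS (uesrc P e) | TED e => RS (esrc D e) end.
Definition total_etgt {C D : catpres} (P : uncurr C D) (e : teqn C D (UEqn P)) : tsort C D :=
  match e with TEC e => LS (etgt C e) | TEP e => RS (uetgt P e) | TED e => RS (etgt D e) end.
Definition total_elhs {C D : catpres} (P : uncurr C D) (e : teqn C D (UEqn P))
  : tpath (usig P) (total_esrc P e) (total_etgt P e) :=
  match e as e0 return tpath (usig P) (total_esrc P e0) (total_etgt P e0) with
  | TEC e => liftC (elhs C e) | TEP e => uelhs P e | TED e => liftD (elhs D e) end.
Definition total_erhs {C D : catpres} (P : uncurr C D) (e : teqn C D (UEqn P))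
  : tpath (usig P) (total_esrc P e) (total_etgt P e) :=
  match e as e0 return tpath (usig P) (total_esrc P e0) (total_etgt P e0) with
  | TEC e => liftC (erhs C e) | TEP e => uerhs P e | TED e => liftD (erhs D e) end.

Definition total {C D : catpres} (P : uncurr C D) : catpres :=
  {| csig_of := usig P; Eqn := teqn C D (UEqn P);
     esrc := total_esrc P; etgt := total_etgt P;
     elhs := total_elhs P; erhs := total_erhs P |}.

Definition upeq {C D : catpres} (P : uncurr C D) {c : Sort C} {d : Sort D}
  (t t' : tpath (usig P) (LS c) (RS d)) : Prop :=
  @peq (total P) (LS c) (RS d) t t'.

Definition umor {C D : catpres} (P P' : uncurr C D) : Type :=
  forall x : UFun P, tpath (usig P') (LS (usrc P x)) (RS (utgt P x)).

Fixpoint uext {C D : catpres} {P P' : uncurr C D} (F : umor P P') {a b : tsort C D}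
  (p : tpath (usig P) a b) : tpath (usig P') a b :=
  match p in tpath _ a b return tpath (usig P') a b with
  | tnil a => tnil (S := usig P') a
  | @tcons _ s b p' =>
      (match s as s0 return tpath (usig P') (@tgt (usig P) s0) b ->
                            tpath (usig P') (@src (usig P) s0) b with
       | SC f => fun q => tcons (S := usig P') (SC f) q
       | SP x => fun q => tapp (F x) q
       | SD g => fun q => tcons (S := usig P') (SD g) q
       end) (uext F p')
  end.

Definition umor_valid {C D : catpres} {P P' : uncurr C D} (F : umor P P') : Prop :=
  forall e : Eqn (total P),
    @peq (total P') _ _ (uext F (elhs (total P) e)) (uext F (erhs (total P) e)).

Definition umor_eqv {C D : catpres} {P P' : uncurr C D} (F G : umor P P') : Prop :=
  forall x : UFun P, upeq P' (F x) (G x).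

Definition umor_comp {C D : catpres} {P P' P'' : uncurr C D}
  (G : umor P' P'') (F : umor P P') : umor P P'' :=
  fun x => uext G (F x).

Definition umor_id {C D : catpres} (P : uncurr C D) : umor P P :=
  fun x => tsing (S := usig P) (SP x).

Inductive is_right {C D : catpres} (P : uncurr C D) : forall a b, tpath (usig P) a b -> Prop :=
| is_right_intro : forall (x : UFun P) (d : Sort D) (g : tpath D (utgt P x) d),
    is_right P _ _ (tcons (S := usig P) (SP x) (liftD g)).
Arguments is_right {C D} P {a b} _.

Inductive is_symP {C D : catpres} (P : uncurr C D) : forall a b, tpath (usig P) a b -> Prop :=
| is_symP_intro : forall x : UFun P, is_symP P _ _ (tsing (S := usig P) (SP x)).
Arguments is_symP {C D} P {a b} _.

Definition rightward {C D : catpres} {P P' : uncurr C D} (F : umor P P') : Prop :=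
  forall x, is_right P' (F x).

Definition nongenerative {C D : catpres} (P : uncurr C D) : Prop :=
  forall (f : Fun C) (d : Sort D) (q : tpath (usig P) (LS (tgt C f)) (RS d)),
    is_symP P q ->
    exists r : tpath (usig P) (LS (src C f)) (RS d),
      is_right P r /\ upeq P (tcons (S := usig P) (SC f) q) r.

Definition Pgen {C D : catpres} (P : uncurr C D) (c : Sort C) : Type :=
  { x : UFun P | usrc P x = c }.

Definition Pterm {C D : catpres} (P : uncurr C D) (c : Sort C) (d : Sort D) : Type :=
  { x : Pgen P c & tpath D (utgt P (proj1_sig x)) d }.

Definition emb {C D : catpres} (P : uncurr C D) {c : Sort C} {d : Sort D}
  (t : Pterm P c d) : tpath (usig P) (LS c) (RS d) :=
  match t with
  | existT _ (exist _ x H) g =>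
      match H in _ = c0 return tpath (usig P) (LS c0) (RS d) with
      | eq_refl => tcons (S := usig P) (SP x) (liftD g)
      end
  end.

Definition castL {C D : catpres} (P : uncurr C D) {c c' : Sort C} {d : Sort D}
  (H : c = c') (p : tpath (usig P) (LS c) (RS d)) : tpath (usig P) (LS c') (RS d) :=
  match H in _ = c0 return tpath (usig P) (LS c0) (RS d) with eq_refl => p end.

(* equations of P^c: the equations of P_E with source c (those whose two
   sides are right cross-paths, i.e. terms of P^c) *)
Definition PEqn {C D : catpres} (P : uncurr C D) (c : Sort C) : Type :=
  { e : UEqn P & { H : uesrc P e = c &
    { tl : Pterm P c (uetgt P e) & { tr : Pterm P c (uetgt P e) |
      emb P tl = castL P H (uelhs P e) /\ emb P tr = castL P H (uerhs P e) } } } }.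

Definition Pinst {C D : catpres} (P : uncurr C D) (c : Sort C) : instpres D :=
  {| IGen := Pgen P c;
     igs := fun x => utgt P (proj1_sig x);
     IEqn := PEqn P c;
     iesort := fun e => uetgt P (projT1 e);
     ilhs := fun e => projT1 (projT2 (projT2 e));
     irhs := fun e => proj1_sig (projT2 (projT2 (projT2 e))) |}.

Definition conservative {C D : catpres} (P : uncurr C D) : Prop :=
  forall (c : Sort C) (d : Sort D) (t t' : iterm (Pinst P c) d),
    upeq P (emb P t) (emb P t') -> ieq (Pinst P c) t t'.

Definition curryable {C D : catpres} (P : uncurr C D) : Prop :=
  nongenerative P /\ conservative P.

Definition fin_uncurr {C D : catpres} (P : uncurr C D) : Prop :=
  finite_type (UFun P) /\ finite_type (UEqn P).

Definition crble_iso {C D : catpres} (Q Q' : uncurr C D) : Prop :=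
  exists (F : umor Q Q') (G : umor Q' Q),
    umor_valid F /\ rightward F /\ umor_valid G /\ rightward G /\
    umor_eqv (umor_comp G F) (umor_id Q) /\ umor_eqv (umor_comp F G) (umor_id Q').

Definition ubar_fun {C D : catpres} (P : curr C D) : Type :=
  { c : Sort C & IGen (Pc P c) }.
Definition ubar_src {C D : catpres} (P : curr C D) (x : ubar_fun P) : Sort C := projT1 x.
Definition ubar_tgt {C D : catpres} (P : curr C D) (x : ubar_fun P) : Sort D :=
  igs (Pc P (projT1 x)) (projT2 x).

Definition ubar_sig {C D : catpres} (P : curr C D) : csig :=
  tsig C D (ubar_fun P) (ubar_src P) (ubar_tgt P).

Definition obar {C D : catpres} (P : curr C D) {c : Sort C} {d : Sort D}
  (t : iterm (Pc P c) d) : tpath (ubar_sig P) (LS c) (RS d) :=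
  match t with
  | existT _ p g => tcons (S := ubar_sig P) (SP (existT _ c p)) (liftD g)
  end.

Inductive ubar_eqn {C D : catpres} (P : curr C D) :=
| UEI (c : Sort C) (e : IEqn (Pc P c))
| UEA (f : Fun C) (p : IGen (Pc P (tgt C f))).
Arguments UEI {C D P} c e.
Arguments UEA {C D P} f p.

Definition ubar_esrc {C D : catpres} (P : curr C D) (e : ubar_eqn P) : Sort C :=
  match e with UEI c _ => c | UEA f _ => src C f end.
Definition ubar_etgt {C D : catpres} (P : curr C D) (e : ubar_eqn P) : Sort D :=
  match e with UEI c e => iesort (Pc P c) e | UEA f p => igs (Pc P (tgt C f)) p end.

(* equations tbar = t'bar for t = t' in P(c) *)
(* and f.pbar = (P(f)(p))bar                 *)
Definition ubar_elhs {C D : catpres} (P : curr C D) (e : ubar_eqn P)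
  : tpath (ubar_sig P) (LS (ubar_esrc P e)) (RS (ubar_etgt P e)) :=
  match e as e0 return tpath (ubar_sig P) (LS (ubar_esrc P e0)) (RS (ubar_etgt P e0)) with
  | UEI c e => obar P (ilhs (Pc P c) e)
  | UEA f p => tcons (S := ubar_sig P) (SC f)
                 (tsing (S := ubar_sig P) (SP (existT _ (tgt C f) p)))
  end.
Definition ubar_erhs {C D : catpres} (P : curr C D) (e : ubar_eqn P)
  : tpath (ubar_sig P) (LS (ubar_esrc P e)) (RS (ubar_etgt P e)) :=
  match e as e0 return tpath (ubar_sig P) (LS (ubar_esrc P e0)) (RS (ubar_etgt P e0)) with
  | UEI c e => obar P (irhs (Pc P c) e)
  | UEA f p => obar P (Pf P f p)
  end.

Definition Pbar {C D : catpres} (P : curr C D) : uncurr C D :=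
  {| UFun := ubar_fun P; usrc := ubar_src P; utgt := ubar_tgt P;
     UEqn := ubar_eqn P; uesrc := ubar_esrc P; uetgt := ubar_etgt P;
     uelhs := ubar_elhs P; uerhs := ubar_erhs P |}.

Definition Fbar {C D : catpres} {P P' : curr C D} (F : currmor P P') : umor (Pbar P) (Pbar P') :=
  fun x => match x as x0 return
             tpath (usig (Pbar P')) (LS (usrc (Pbar P) x0)) (RS (utgt (Pbar P) x0)) with
           | existT _ c p => obar P' (F c p)
           end.

From Stdlib Require Import List ClassicalEpsilon ProofIrrelevance.

(* Every path of |Pbar P| has a normal form -- a C-path, a term of some P(c), or a
   D-path -- computed by letting each C-symbol act on the term to its right
   through P(f). Normalisation respects provable equality (when P is valid), and
   every path is provably equal to its normal form read back as a path. Reading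
   these two facts on cross-paths gives nongenerativity and conservativity of
   Pbar P, faithfulness of uncurrying, and fullness: a rightward morphism
   Pbar P -> Pbar P' is recovered from the normal forms of its values.
   Conversely, a curryable Q is isomorphic to the uncurrying of c |-> Q^c, where
   nongenerativity chooses the action of each f and conservativity makes it
   respect the equations. *)

Ltac destruct_empty := match goal with e : Empty_set |- _ => destruct e end.

Section Paths.
Context {S : csig}.

Lemma tapp_nil_r {a b : Sort S} (p : tpath S a b) : tapp p (tnil b) = p.
Proof. induction p as [|f b p IH]; simpl; [reflexivity | now rewrite IH]. Qed.

Lemma tapp_assoc {a b c d : Sort S} (p : tpath S a b) (q : tpath S b c) (r : tpath S c d) :
  tapp (tapp p q) r = tapp p (tapp q r).
Proof. induction p as [|f b p IH]; simpl; [reflexivity | now rewrite IH]. Qed.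

End Paths.

Section ProvableEquality.
Context {C : catpres}.

Lemma peq_app_l {a b c : Sort C} (r : tpath C a b) (p q : tpath C b c) :
  peq C p q -> peq C (tapp r p) (tapp r q).
Proof. induction r; intro H; simpl; [exact H | apply peq_pre; auto]. Qed.

Lemma peq_app_r {a b c : Sort C} (p q : tpath C a b) (r : tpath C b c) :
  peq C p q -> peq C (tapp p r) (tapp q r).
Proof.
  revert a p q; induction r as [b|f b r IH]; intros a p q H.
  - now rewrite !tapp_nil_r.
  - assert (E : forall p0 : tpath C a (src C f), tapp p0 (tcons f r) = tapp (tapp p0 (tsing f)) r)
      by (intro p0; now rewrite tapp_assoc).
    rewrite !E. apply IH, peq_post, H.
Qed.

End ProvableEquality.

Section InstancePresentations.
Context {D : catpres}.

Definition gen_term (I : instpres D) (x : IGen I) : iterm I (igs I x) :=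
  existT _ x (tnil (igs I x)).

Lemma tconcat_nil {I : instpres D} {d : Sort D} (t : iterm I d) : tconcat t (tnil d) = t.
Proof. destruct t as [x g]; unfold tconcat; simpl; now rewrite tapp_nil_r. Qed.

Lemma tconcat_app {I : instpres D} {d d' d'' : Sort D} (t : iterm I d)
  (g : tpath D d d') (h : tpath D d' d'') :
  tconcat (tconcat t g) h = tconcat t (tapp g h).
Proof. destruct t as [x k]; unfold tconcat; simpl; now rewrite tapp_assoc. Qed.

Lemma ieq_tconcat {I : instpres D} {d d' : Sort D} (t u : iterm I d) (g : tpath D d d') :
  ieq I t u -> ieq I (tconcat t g) (tconcat u g).
Proof.
  revert t u; induction g as [d|f d' g IH]; intros t u H.
  - now rewrite !tconcat_nil.
  - assert (E : forall v : iterm I (src D f), tconcat v (tcons f g) = tconcat (tconcat v (tsing f)) g)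
      by (intro v; now rewrite tconcat_app).
    rewrite !E. apply IH, ieq_post, H.
Qed.

Lemma ieq_tconcat_peq {I : instpres D} {d d' : Sort D} (t : iterm I d) (g g' : tpath D d d') :
  peq D g g' -> ieq I (tconcat t g) (tconcat t g').
Proof.
  intro H; revert t.
  induction H as [e|a b p|a b p q H IH|a b p q r H1 IH1 H2 IH2|f b p q H IH|f a p q H IH]; intro t.
  - apply ieq_deq.
  - apply ieq_refl.
  - apply ieq_sym, IH.
  - eapply ieq_trans; [apply IH1 | apply IH2].
  - assert (E : forall v : tpath D (tgt D f) b, tconcat t (tcons f v) = tconcat (tconcat t (tsing f)) v)
      by (intro v; now rewrite tconcat_app).
    rewrite !E. apply IH.
  - rewrite <- !tconcat_app. apply ieq_post, IH.
Qed.

Lemma imap_tconcat {I J : instpres D} (F : instmor I J) {d d' : Sort D} (t : iterm I d)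
  (g : tpath D d d') : imap F (tconcat t g) = tconcat (imap F t) g.
Proof. destruct t as [x h]; simpl; now rewrite tconcat_app. Qed.

Lemma imap_id {I : instpres D} {d : Sort D} (t : iterm I d) : imap (instmor_id I) t = t.
Proof. now destruct t. Qed.

Lemma imap_comp {I J K : instpres D} (G : instmor J K) (F : instmor I J) {d : Sort D}
  (t : iterm I d) : imap (instmor_comp G F) t = imap G (imap F t).
Proof.
  destruct t as [x g]; unfold instmor_comp; simpl.
  destruct (F x) as [y h]; simpl; now rewrite tconcat_app.
Qed.

Lemma ieq_imap {I J : instpres D} (F : instmor I J) {d : Sort D} (t u : iterm I d) :
  instmor_valid F -> ieq I t u -> ieq J (imap F t) (imap F u).
Proof.
  intros HF H; induction H.
  - apply HF.
  - apply ieq_refl.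
  - now apply ieq_sym.
  - eapply ieq_trans; eauto.
  - rewrite !imap_tconcat. now apply ieq_post.
  - rewrite !imap_tconcat. apply ieq_deq.
Qed.

Lemma ieq_imap_eqv {I J : instpres D} (F G : instmor I J) {d : Sort D} (t : iterm I d) :
  instmor_eqv F G -> ieq J (imap F t) (imap G t).
Proof. intro H; destruct t as [x g]; simpl. apply ieq_tconcat, H. Qed.

End InstancePresentations.

Section CurriedPresentations.
Context {C D : catpres} (P : curr C D).

Lemma Ppath_app {a b c : Sort C} (p : tpath C a b) (q : tpath C b c) (x : IGen (Pc P c)) :
  Ppath P (tapp p q) x = imap (Ppath P p) (Ppath P q x).
Proof.
  induction p as [a|f b p IH]; simpl.
  - now rewrite imap_id.
  - unfold instmor_comp. rewrite IH. symmetry; apply (imap_comp (Pf P f) (Ppath P p)).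
Qed.

Lemma Ppath_peq {a b : Sort C} (p q : tpath C a b) :
  curr_valid P -> peq C p q -> instmor_eqv (Ppath P p) (Ppath P q).
Proof.
  intros [Hf He] H; induction H; intro x.
  - apply He.
  - apply ieq_refl.
  - now apply ieq_sym.
  - eapply ieq_trans; eauto.
  - simpl; unfold instmor_comp. now apply ieq_imap.
  - rewrite !Ppath_app. now apply ieq_imap_eqv.
Qed.

End CurriedPresentations.

Lemma liftD_app {C D : csig} {X : Type} {xs : X -> Sort C} {xt : X -> Sort D} {a b c : Sort D}
  (g : tpath D a b) (h : tpath D b c) :
  liftD (C := C) (xs := xs) (xt := xt) (tapp g h) = tapp (liftD g) (liftD h).
Proof. induction g as [|f b g IH]; simpl; [reflexivity | now rewrite IH]. Qed.

Section Substitution.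
Context {C D : catpres} {P P' : uncurr C D} (F : umor P P').

Lemma uext_liftC {a b : Sort C} (p : tpath C a b) :
  uext F (liftC (xs := usrc P) (xt := utgt P) p) = liftC p.
Proof. induction p as [|f b p IH]; simpl; [reflexivity | now rewrite IH]. Qed.

Lemma uext_liftD {a b : Sort D} (p : tpath D a b) :
  uext F (liftD (xs := usrc P) (xt := utgt P) p) = liftD p.
Proof. induction p as [|f b p IH]; simpl; [reflexivity | now rewrite IH]. Qed.

Lemma uext_app {a b c : tsort C D} (p : tpath (usig P) a b) (q : tpath (usig P) b c) :
  uext F (tapp p q) = tapp (uext F p) (uext F q).
Proof.
  induction p as [a|s b p IH]; [reflexivity|].
  destruct s; simpl; rewrite IH; [reflexivity | now rewrite tapp_assoc | reflexivity].
Qed.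

Lemma uext_peq {a b : tsort C D} (p q : tpath (usig P) a b) :
  umor_valid F -> @peq (total P) a b p q -> @peq (total P') a b (uext F p) (uext F q).
Proof.
  intros HF H; induction H as [e| | | |s b p q H IH|s a p q H IH].
  - apply HF.
  - apply peq_refl.
  - now apply peq_sym.
  - eapply peq_trans; eauto.
  - destruct s; simpl;
      [exact (peq_pre (total P') (SC _) _ _ _ IH) | exact (peq_app_l (C := total P') _ _ _ IH)
      | exact (peq_pre (total P') (SD _) _ _ _ IH)].
  - rewrite !uext_app. exact (peq_app_r (C := total P') _ _ _ IH).
Qed.

End Substitution.

Section Uncurrying.
Context {C D : catpres} (P : curr C D).

Lemma obar_tconcat {c : Sort C} {d d' : Sort D} (t : iterm (Pc P c) d) (g : tpath D d d') :
  obar P (tconcat t g) = tapp (obar P t) (liftD g).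
Proof. destruct t as [p h]; simpl; now rewrite liftD_app. Qed.

Lemma upeq_obar_act (f : Fun C) {d : Sort D} (u : iterm (Pc P (tgt C f)) d) :
  upeq (Pbar P) (tcons (S := usig (Pbar P)) (SC f) (obar P u)) (obar P (imap (Pf P f) u)).
Proof.
  destruct u as [p g]. unfold upeq; simpl (imap _ _). rewrite obar_tconcat.
  exact (peq_app_r (C := total (Pbar P)) _ _ (liftD g) (peq_eqn (total (Pbar P)) (TEP (UEA f p)))).
Qed.

Lemma upeq_obar {c : Sort C} {d : Sort D} (u v : iterm (Pc P c) d) :
  ieq (Pc P c) u v -> upeq (Pbar P) (obar P u) (obar P v).
Proof.
  unfold upeq; induction 1.
  - exact (peq_eqn (total (Pbar P)) (TEP (UEI c e))).
  - apply peq_refl.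
  - now apply peq_sym.
  - eapply peq_trans; eauto.
  - rewrite !obar_tconcat. exact (peq_app_r (C := total (Pbar P)) _ _ _ IHieq).
  - rewrite !obar_tconcat. exact (peq_app_l (C := total (Pbar P)) _ _ _ (peq_eqn (total (Pbar P)) (TED e))).
Qed.

(* [Empty_set]: |Pbar P| has no paths from a D-sort to a C-sort. *)
Definition nform (a b : tsort C D) : Type :=
  match a, b with
  | LS c, LS c' => tpath C c c'
  | LS c, RS d => iterm (Pc P c) d
  | RS d, RS d' => tpath D d d'
  | RS _, LS _ => Empty_set
  end.

Definition nform_eq (a b : tsort C D) : nform a b -> nform a b -> Prop :=
  match a, b with
  | LS c, LS c' => fun t u => peq C t u
  | LS c, RS d => fun t u => ieq (Pc P c) t u
  | RS d, RS d' => fun t u => peq D t u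
  | RS _, LS _ => fun _ _ => True
  end.

Definition readback (a b : tsort C D) : nform a b -> tpath (ubar_sig P) a b :=
  match a, b with
  | LS c, LS c' => fun t => liftC t
  | LS c, RS d => fun t => obar P t
  | RS d, RS d' => fun t => liftD t
  | RS _, LS _ => fun t => match t with end
  end.

Definition nform_id (a : tsort C D) : nform a a :=
  match a with LS c => tnil c | RS d => tnil d end.

Definition nform_cons (s : Fun (ubar_sig P)) (b : tsort C D) :
  nform (tgt (ubar_sig P) s) b -> nform (src (ubar_sig P) s) b :=
  match s with
  | SC f => match b with
            | LS c' => fun t => tcons f t
            | RS d => fun t => imap (Pf P f) t
            end
  | SP x => match b with
            | LS c' => fun t => match t with end
            | RS d => fun g => existT _ (projT2 x) g
            end
  | SD g => match b with
            | LS c' => fun t => match t with end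
            | RS d => fun t => tcons g t
            end
  end.

Definition nform_app (a b c : tsort C D) : nform a b -> nform b c -> nform a c :=
  match a, b, c with
  | LS x, LS y, LS z => fun t u => tapp t u
  | LS x, LS y, RS z => fun t u => imap (Ppath P t) u
  | LS x, RS y, RS z => fun t u => tconcat t u
  | RS x, RS y, RS z => fun t u => tapp t u
  | LS x, RS y, LS z => fun t u => match u with end
  | RS x, RS y, LS z => fun t u => match u with end
  | RS x, LS y, _ => fun t u => match t with end
  end.

Fixpoint normalize {a b : tsort C D} (p : tpath (ubar_sig P) a b) : nform a b :=
  match p with
  | tnil a => nform_id a
  | tcons s p' => nform_cons s _ (normalize p')
  end.

Lemma normalize_liftC {c c' : Sort C} (t : tpath C c c') :
  normalize (liftC (xs := ubar_src P) (xt := ubar_tgt P) t) = t.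
Proof. induction t as [|f c' t IH]; simpl; [reflexivity | now rewrite IH]. Qed.

Lemma normalize_liftD {d d' : Sort D} (g : tpath D d d') :
  normalize (liftD (xs := ubar_src P) (xt := ubar_tgt P) g) = g.
Proof. induction g as [|f d' g IH]; simpl; [reflexivity | now rewrite IH]. Qed.

Lemma normalize_obar {c : Sort C} {d : Sort D} (t : iterm (Pc P c) d) : normalize (obar P t) = t.
Proof. destruct t as [p g]; simpl. now rewrite normalize_liftD. Qed.

Lemma nform_cons_app (s : Fun (ubar_sig P)) (b c : tsort C D)
  (t : nform (tgt (ubar_sig P) s) b) (u : nform b c) :
  nform_cons s c (nform_app _ b c t u) = nform_app _ b c (nform_cons s b t) u.
Proof.
  destruct s as [f|x|g], b, c; simpl in *;
    try destruct_empty; try reflexivity.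
  - symmetry; apply (imap_comp (Pf P f) (Ppath P t)).
  - apply imap_tconcat.
Qed.

Lemma normalize_app {a b c : tsort C D} (p : tpath (ubar_sig P) a b) (q : tpath (ubar_sig P) b c) :
  normalize (tapp p q) = nform_app a b c (normalize p) (normalize q).
Proof.
  induction p as [a|s b p IH]; simpl.
  - generalize (normalize q).
    destruct a, c; simpl; intro u; [reflexivity | symmetry; apply imap_id | destruct u | reflexivity].
  - rewrite IH. apply nform_cons_app.
Qed.

Lemma nform_eq_refl {a b} (t : nform a b) : nform_eq a b t t.
Proof. destruct a, b; simpl; constructor. Qed.

Lemma nform_eq_sym {a b} (t u : nform a b) : nform_eq a b t u -> nform_eq a b u t.
Proof. destruct a, b; simpl; auto using peq_sym, ieq_sym. Qed.

Lemma nform_eq_trans {a b} (t u v : nform a b) :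
  nform_eq a b t u -> nform_eq a b u v -> nform_eq a b t v.
Proof. destruct a, b; simpl; eauto using peq_trans, ieq_trans. Qed.

Section ValidPresentation.
Hypothesis HP : curr_valid P.

Lemma nform_eq_cons (s : Fun (ubar_sig P)) b (t u : nform (tgt (ubar_sig P) s) b) :
  nform_eq _ b t u -> nform_eq _ b (nform_cons s b t) (nform_cons s b u).
Proof.
  destruct s as [f|x|g], b; simpl in *; intro H;
    try destruct_empty.
  - now apply peq_pre.
  - apply ieq_imap; [apply (proj1 HP) | exact H].
  - exact (ieq_tconcat_peq (gen_term _ (projT2 x)) _ _ H).
  - now apply peq_pre.
Qed.

Lemma nform_eq_app_l {a b c} (t t' : nform a b) (u : nform b c) :
  nform_eq a b t t' -> nform_eq a c (nform_app a b c t u) (nform_app a b c t' u).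
Proof.
  destruct a, b, c; simpl in *; intro H;
    try destruct_empty; try exact I.
  - now apply peq_app_r.
  - now apply ieq_imap_eqv, Ppath_peq.
  - now apply ieq_tconcat.
  - now apply peq_app_r.
Qed.

Lemma nform_eq_normalize {a b : tsort C D} (p q : tpath (usig (Pbar P)) a b) :
  @peq (total (Pbar P)) a b p q -> nform_eq a b (normalize p) (normalize q).
Proof.
  induction 1.
  - destruct e as [e|[c e|f p]|e]; simpl.
    + rewrite !normalize_liftC. apply peq_eqn.
    + rewrite !normalize_obar. apply ieq_eqn.
    + rewrite normalize_obar, tconcat_nil. apply ieq_refl.
    + rewrite !normalize_liftD. apply peq_eqn.
  - apply nform_eq_refl.
  - now apply nform_eq_sym.
  - eapply nform_eq_trans; eauto.
  - now apply nform_eq_cons.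
  - rewrite !normalize_app. now apply nform_eq_app_l.
Qed.

End ValidPresentation.

Lemma peq_readback_normalize {a b : tsort C D} (r : tpath (ubar_sig P) a b) :
  @peq (total (Pbar P)) a b r (readback a b (normalize r)).
Proof.
  induction r as [a|s b r IH].
  - destruct a; apply peq_refl.
  - simpl. revert r IH. destruct s as [f|[c x]|g], b; intros r IH; simpl in *;
      try solve [destruct (normalize r)].
    + exact (peq_pre (total (Pbar P)) (SC f) _ _ _ IH).
    + eapply peq_trans; [exact (peq_pre (total (Pbar P)) (SC f) _ _ _ IH) | apply upeq_obar_act].
    + exact (peq_pre (total (Pbar P)) (SP (existT _ c x)) _ _ _ IH).
    + exact (peq_pre (total (Pbar P)) (SD g) _ _ _ IH).
Qed.

End Uncurrying.

Section UncurryingIsCurryable.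
Context {C D : catpres} (P : curr C D).

Definition to_Pinst {c : Sort C} {d : Sort D} (u : iterm (Pc P c) d) : iterm (Pinst (Pbar P) c) d :=
  match u with
  | existT _ p g => existT (fun x : Pgen (Pbar P) c => tpath D (utgt (Pbar P) (proj1_sig x)) d)
                      (exist (fun x : ubar_fun P => ubar_src P x = c) (existT _ c p) eq_refl) g
  end.

Lemma to_Pinst_tconcat {c : Sort C} {d d' : Sort D} (u : iterm (Pc P c) d) (g : tpath D d d') :
  to_Pinst (tconcat u g) = tconcat (to_Pinst u) g.
Proof. now destruct u. Qed.

Lemma emb_to_Pinst {c : Sort C} {d : Sort D} (u : iterm (Pc P c) d) :
  emb (Pbar P) (to_Pinst u) = obar P u.
Proof. now destruct u. Qed.

Lemma to_Pinst_normalize_emb {c : Sort C} {d : Sort D} (t : iterm (Pinst (Pbar P) c) d) :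
  to_Pinst (normalize P (emb (Pbar P) t)) = t.
Proof.
  destruct t as [[[c0 p] Hx] g]. simpl in Hx. subst c. simpl.
  now rewrite normalize_liftD.
Qed.

Lemma ieq_to_Pinst {c : Sort C} {d : Sort D} (u v : iterm (Pc P c) d) :
  ieq (Pc P c) u v -> ieq (Pinst (Pbar P) c) (to_Pinst u) (to_Pinst v).
Proof.
  induction 1.
  - exact (ieq_eqn (Pinst (Pbar P) c)
      (existT _ (UEI (P := P) c e) (existT _ eq_refl (existT _ (to_Pinst (ilhs (Pc P c) e))
        (exist _ (to_Pinst (irhs (Pc P c) e)) (conj (emb_to_Pinst _) (emb_to_Pinst _))))))).
  - apply ieq_refl.
  - now apply ieq_sym.
  - eapply ieq_trans; eauto.
  - rewrite !to_Pinst_tconcat. now apply ieq_post.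
  - rewrite !to_Pinst_tconcat. apply ieq_deq.
Qed.

Lemma Pbar_nongenerative : nongenerative (Pbar P).
Proof.
  intros f d q _. set (r := tcons (S := usig (Pbar P)) (SC f) q).
  exists (obar P (normalize P r)). split.
  - destruct (normalize P r) as [p g].
    exact (is_right_intro (Pbar P) (existT _ (src C f) p) d g).
  - exact (peq_readback_normalize P r).
Qed.

Lemma Pbar_conservative : curr_valid P -> conservative (Pbar P).
Proof.
  intros HP c d t t' H.
  rewrite <- (to_Pinst_normalize_emb t), <- (to_Pinst_normalize_emb t').
  apply ieq_to_Pinst. exact (nform_eq_normalize P HP _ _ H).
Qed.

End UncurryingIsCurryable.

Section UncurryingFunctor.
Context {C D : catpres}.

Lemma uext_Fbar_obar {P P' : curr C D} (F : currmor P P') {c : Sort C} {d : Sort D} (u : iterm (Pc P c) d) :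
  uext (Fbar F) (obar P u) = obar P' (imap (F c) u).
Proof.
  destruct u as [p g]. simpl (imap _ _). rewrite obar_tconcat. simpl.
  f_equal. exact (uext_liftD (Fbar F) g).
Qed.

Lemma Fbar_valid {P P' : curr C D} (F : currmor P P') : currmor_valid F -> umor_valid (Fbar F).
Proof.
  intros [HF HN] [e|[c e|f p]|e]; simpl.
  - rewrite !(uext_liftC (Fbar F)). exact (peq_eqn (total (Pbar P')) (TEC e)).
  - rewrite !uext_Fbar_obar. apply upeq_obar, HF.
  - rewrite uext_Fbar_obar, tapp_nil_r.
    eapply peq_trans; [apply upeq_obar_act | apply upeq_obar, ieq_sym, (HN f p)].
  - rewrite !(uext_liftD (Fbar F)). exact (peq_eqn (total (Pbar P')) (TED e)).
Qed.

Lemma Fbar_rightward {P P' : curr C D} (F : currmor P P') : rightward (Fbar F).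
Proof.
  intros [c p]. simpl. destruct (F c p) as [q g].
  exact (is_right_intro (Pbar P') (existT _ c q) _ g).
Qed.

Lemma Fbar_id (P : curr C D) : umor_eqv (Fbar (currmor_id P)) (umor_id (Pbar P)).
Proof. intros [c p]. apply peq_refl. Qed.

Lemma Fbar_comp {P P' P'' : curr C D} (F : currmor P P') (G : currmor P' P'') :
  umor_eqv (Fbar (currmor_comp G F)) (umor_comp (Fbar G) (Fbar F)).
Proof. intros [c p]. unfold umor_comp; simpl (Fbar F _). rewrite uext_Fbar_obar. apply peq_refl. Qed.

Lemma Fbar_eqv {P P' : curr C D} (F G : currmor P P') :
  curr_valid P' -> (currmor_eqv F G <-> umor_eqv (Fbar F) (Fbar G)).
Proof.
  intro HP'; split.
  - intros H [c p]. apply upeq_obar, H.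
  - intros H c p. pose proof (nform_eq_normalize P' HP' _ _ (H (existT _ c p))) as K.
    simpl in K. now rewrite !normalize_obar in K.
Qed.

Definition unFbar {P P' : curr C D} (H : umor (Pbar P) (Pbar P')) : currmor P P' :=
  fun c p => normalize P' (H (existT _ c p)).

Lemma normalize_uext_obar {P P' : curr C D} (H : umor (Pbar P) (Pbar P')) {c : Sort C} {d : Sort D}
  (u : iterm (Pc P c) d) : normalize P' (uext H (obar P u)) = imap (unFbar H c) u.
Proof.
  destruct u as [p g]. cbn [obar uext].
  etransitivity; [apply normalize_app |]. simpl. f_equal.
  transitivity (normalize P' (liftD (xs := ubar_src P') (xt := ubar_tgt P') g));
    [exact (f_equal (normalize P') (uext_liftD H g)) | apply normalize_liftD].
Qed.

Lemma Fbar_full {P P' : curr C D} (H : umor (Pbar P) (Pbar P')) :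
  curr_valid P' -> umor_valid H -> currmor_valid (unFbar H) /\ umor_eqv (Fbar (unFbar H)) H.
Proof.
  intros HP' HV. split; [split|].
  - intros c e. pose proof (nform_eq_normalize P' HP' _ _ (HV (TEP (UEI c e)))) as K.
    simpl in K. now rewrite !normalize_uext_obar in K.
  - intros f p. pose proof (nform_eq_normalize P' HP' _ _ (HV (TEP (UEA f p)))) as K.
    simpl in K. rewrite tapp_nil_r, normalize_uext_obar in K. now apply ieq_sym.
  - intros [c p]. apply peq_sym, (peq_readback_normalize P' (H (existT _ c p))).
Qed.

End UncurryingFunctor.

Section Currying.
Context {C D : catpres} (Q : uncurr C D).

Lemma emb_tconcat {c : Sort C} {d d' : Sort D} (t : iterm (Pinst Q c) d) (g : tpath D d d') :
  emb Q (tconcat t g) = tapp (emb Q t) (liftD g).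
Proof. destruct t as [[x Hx] h]. destruct Hx. simpl. now rewrite liftD_app. Qed.

Lemma upeq_castL {c c' : Sort C} (H : c = c') {d : Sort D} (p q : tpath (usig Q) (LS c) (RS d)) :
  upeq Q p q -> upeq Q (castL Q H p) (castL Q H q).
Proof. now destruct H. Qed.

Lemma is_symP_emb_gen {c : Sort C} (x : Pgen Q c) : is_symP Q (emb Q (gen_term (Pinst Q c) x)).
Proof. destruct x as [x Hx]. destruct Hx. exact (is_symP_intro Q x). Qed.

Lemma is_right_emb {c : Sort C} {d : Sort D} (r : tpath (usig Q) (LS c) (RS d)) :
  is_right Q r -> exists t : Pterm Q c d, emb Q t = r.
Proof.
  intro H.
  enough (K : forall a b (r : tpath (usig Q) a b), is_right Q r ->
              match a, b return tpath (usig Q) a b -> Prop with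
              | LS c, RS d => fun r => exists t : Pterm Q c d, emb Q t = r
              | _, _ => fun _ => True
              end r) by exact (K _ _ r H).
  intros a b r' [x d' g]. now exists (existT _ (exist _ x eq_refl) g).
Qed.

Section Nongenerative.
Hypothesis NG : nongenerative Q.

Lemma curried_act_exists (f : Fun C) (x : Pgen Q (tgt C f)) :
  exists t : iterm (Pinst Q (src C f)) (utgt Q (proj1_sig x)),
    upeq Q (tcons (S := usig Q) (SC f) (emb Q (gen_term (Pinst Q _) x))) (emb Q t).
Proof.
  destruct (NG f _ _ (is_symP_emb_gen x)) as [r [Hr Hfr]].
  destruct (is_right_emb r Hr) as [t Ht]. subst r. exists t. exact Hfr.
Qed.

Definition curried_act (f : Fun C) : instmor (Pinst Q (tgt C f)) (Pinst Q (src C f)) :=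
  fun x => proj1_sig (constructive_indefinite_description _ (curried_act_exists f x)).

Lemma curried_act_spec (f : Fun C) (x : Pgen Q (tgt C f)) :
  upeq Q (tcons (S := usig Q) (SC f) (emb Q (gen_term (Pinst Q _) x))) (emb Q (curried_act f x)).
Proof. exact (proj2_sig (constructive_indefinite_description _ (curried_act_exists f x))). Qed.

(* The curried presentation [c |-> Q^c]; the action of [f] is a choice of the
   right cross-paths that nongenerativity provides. *)
Definition curried : curr C D := {| Pc := Pinst Q; Pf := curried_act |}.

Lemma upeq_emb_curried_act (f : Fun C) {d : Sort D} (u : iterm (Pinst Q (tgt C f)) d) :
  upeq Q (tcons (S := usig Q) (SC f) (emb Q u)) (emb Q (imap (curried_act f) u)).
Proof.
  destruct u as [x g]. simpl (imap _ _). rewrite emb_tconcat.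
  change (existT _ x g) with (tconcat (gen_term (Pinst Q (tgt C f)) x) g).
  rewrite emb_tconcat.
  exact (peq_app_r (C := total Q) _ _ (liftD g) (curried_act_spec f x)).
Qed.

Lemma upeq_emb_Ppath {a b : Sort C} (p : tpath C a b) (x : Pgen Q b) :
  upeq Q (tapp (liftC (D := D) (xs := usrc Q) (xt := utgt Q) p) (emb Q (gen_term (Pinst Q b) x)))
         (emb Q (Ppath curried p x)).
Proof.
  induction p as [a|f b p IH].
  - apply peq_refl.
  - eapply peq_trans; [exact (peq_pre (total Q) (SC f) _ _ _ (IH x)) | apply upeq_emb_curried_act].
Qed.

Lemma curried_valid : conservative Q -> curr_valid curried.
Proof.
  intro CV; split.
  - intros f [e [H [tl [tr [El Er]]]]]. apply CV.
    eapply peq_trans; [apply peq_sym, upeq_emb_curried_act |].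
    eapply peq_trans; [| apply upeq_emb_curried_act].
    apply (peq_pre (total Q) (SC f)). change (upeq Q (emb Q tl) (emb Q tr)).
    rewrite El, Er. apply upeq_castL, (peq_eqn (total Q) (TEP e)).
  - intros e x. apply CV.
    eapply peq_trans; [apply peq_sym, upeq_emb_Ppath |].
    eapply peq_trans; [| apply upeq_emb_Ppath].
    exact (peq_app_r (C := total Q) _ _ _ (peq_eqn (total Q) (TEC e))).
Qed.

Definition to_Pbar_curried : umor Q (Pbar curried) :=
  fun x => tsing (S := usig (Pbar curried))
    (SP (existT (fun c => IGen (Pc curried c)) (usrc Q x) (exist _ x eq_refl))).

Definition of_Pbar_curried : umor (Pbar curried) Q :=
  fun y => match y with existT _ c x => emb Q (gen_term (Pinst Q c) x) end.

Lemma uext_of_to_Pbar_curried {a b : tsort C D} (p : tpath (usig Q) a b) :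
  uext of_Pbar_curried (uext to_Pbar_curried p) = p.
Proof.
  induction p as [a|s b p IH]; [reflexivity|].
  destruct s; simpl; f_equal; exact IH.
Qed.

Lemma uext_of_Pbar_curried_obar {c : Sort C} {d : Sort D} (u : iterm (Pinst Q c) d) :
  uext of_Pbar_curried (obar curried u) = emb Q u.
Proof.
  destruct u as [x g]. cbn [obar uext].
  change (existT _ x g) with (tconcat (gen_term (Pinst Q c) x) g).
  rewrite emb_tconcat. f_equal. exact (uext_liftD of_Pbar_curried g).
Qed.

Lemma of_Pbar_curried_valid : umor_valid of_Pbar_curried.
Proof.
  intros [e|[c e|f x]|e]; simpl.
  - rewrite !(uext_liftC of_Pbar_curried). exact (peq_eqn (total Q) (TEC e)).
  - rewrite !uext_of_Pbar_curried_obar.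
    destruct e as [e [H [tl [tr [El Er]]]]]; simpl.
    rewrite El, Er. apply upeq_castL, (peq_eqn (total Q) (TEP e)).
  - rewrite uext_of_Pbar_curried_obar, tapp_nil_r. apply curried_act_spec.
  - rewrite !(uext_liftD of_Pbar_curried). exact (peq_eqn (total Q) (TED e)).
Qed.

Lemma upeq_emb_normalize {c : Sort C} {d : Sort D} (p : tpath (usig Q) (LS c) (RS d)) :
  upeq Q p (emb Q (normalize curried (uext to_Pbar_curried p))).
Proof.
  rewrite <- (uext_of_to_Pbar_curried p) at 1. rewrite <- uext_of_Pbar_curried_obar.
  apply uext_peq; [exact of_Pbar_curried_valid | exact (peq_readback_normalize curried (uext to_Pbar_curried p))].
Qed.

Lemma to_Pbar_curried_valid : conservative Q -> umor_valid to_Pbar_curried.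
Proof.
  intros CV [e|e|e]; simpl.
  - rewrite !(uext_liftC to_Pbar_curried). exact (peq_eqn (total (Pbar curried)) (TEC e)).
  - eapply peq_trans; [apply peq_readback_normalize |].
    eapply peq_trans; [| apply peq_sym, peq_readback_normalize]. simpl.
    apply upeq_obar, CV.
    eapply peq_trans; [apply peq_sym, upeq_emb_normalize |].
    eapply peq_trans; [| apply upeq_emb_normalize].
    exact (peq_eqn (total Q) (TEP e)).
  - rewrite !(uext_liftD to_Pbar_curried). exact (peq_eqn (total (Pbar curried)) (TED e)).
Qed.

Lemma curryable_iso_Pbar_curried : conservative Q -> crble_iso Q (Pbar curried).
Proof.
  intro CV. exists to_Pbar_curried, of_Pbar_curried.
  split; [| split; [| split; [| split; [| split]]]].
  - exact (to_Pbar_curried_valid CV).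
  - intro x. exact (is_right_intro (Pbar curried) (existT _ (usrc Q x) (exist _ x eq_refl)) _ (tnil _)).
  - exact of_Pbar_curried_valid.
  - intros [c [x Hx]]. destruct Hx. exact (is_right_intro Q x _ (tnil _)).
  - intro x. apply peq_refl.
  - intros [c [x Hx]]. destruct Hx. apply peq_refl.
Qed.

End Nongenerative.
End Currying.


Lemma finite_sigT (A : Type) (B : A -> Type) :
  finite_type A -> (forall a, finite_type (B a)) -> finite_type {a : A & B a}.
Proof.
  intros [la Hla] HB.
  assert (K : forall l : list A, exists m, forall a, In a l -> forall b, In (existT B a b) m).
  { induction l as [|a l [m Hm]].
    - exists nil. intros a [].
    - destruct (HB a) as [lb Hlb]. exists (map (existT B a) lb ++ m).
      intros a' [<-|Hin] b; apply in_or_app; [left; apply in_map, Hlb | right; auto]. }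
  destruct (K la) as [m Hm]. exists m. intros [a b]. apply Hm, Hla.
Qed.

Lemma finite_surj (A B : Type) (f : A -> B) :
  finite_type A -> (forall b, exists a, f a = b) -> finite_type B.
Proof.
  intros [la Hla] Hf. exists (map f la). intro b.
  destruct (Hf b) as [a <-]. apply in_map, Hla.
Qed.

Lemma finite_sum (A B : Type) : finite_type A -> finite_type B -> finite_type (A + B).
Proof.
  intros [la Hla] [lb Hlb]. exists (map inl la ++ map inr lb).
  intros [a|b]; apply in_or_app; [left | right]; apply in_map; auto.
Qed.

Lemma finite_subsingleton (T : Type) : (forall x y : T, x = y) -> finite_type T.
Proof.
  intro H. destruct (classic (exists x : T, True)) as [[x _]|N].
  - exists (x :: nil). intro y. left. apply H.
  - exists nil. intro y. exfalso. apply N. now exists y.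
Qed.

Lemma finite_sig (A : Type) (P : A -> Prop) : finite_type A -> finite_type {x : A | P x}.
Proof.
  intro HA. apply (finite_surj {x : A & P x} _ (fun s => exist P (projT1 s) (projT2 s))).
  - apply finite_sigT; [exact HA |]. intro x. apply finite_subsingleton, proof_irrelevance.
  - intros [x H]. now exists (existT P x H).
Qed.

Fixpoint tolist {S : csig} {a b : Sort S} (p : tpath S a b) : list (Fun S) :=
  match p with tnil _ => nil | tcons f p' => f :: tolist p' end.

Lemma tolist_inj_dep {S : csig} {a a' b : Sort S} (g : tpath S a b) (g' : tpath S a' b) :
  tolist g = tolist g' -> existT (fun x => tpath S x b) a g = existT _ a' g'.
Proof.
  revert a' g'; induction g as [a|f b g IH]; intros a' g' H;
    destruct g' as [a''|f' b' g']; simpl in H; try discriminate H.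
  - reflexivity.
  - injection H as <- Hl.
    specialize (IH _ g' Hl). apply inj_pair2 in IH. now subst g'.
Qed.

Lemma tolist_inj {S : csig} {a b : Sort S} (g g' : tpath S a b) : tolist g = tolist g' -> g = g'.
Proof. intro H. exact (inj_pair2 _ _ _ _ _ (tolist_inj_dep g g' H)). Qed.

Lemma tolist_liftD {C D : csig} {X : Type} {xs : X -> Sort C} {xt : X -> Sort D} {a b : Sort D}
  (g : tpath D a b) : tolist (liftD (C := C) (xs := xs) (xt := xt) g) = map SD (tolist g).
Proof. induction g as [|f b g IH]; simpl; [reflexivity | now rewrite IH]. Qed.

Lemma map_inj {A B : Type} (f : A -> B) :
  (forall x y, f x = f y -> x = y) -> forall l l', map f l = map f l' -> l = l'.
Proof.
  intros Hf l; induction l as [|x l IH]; intros [|y l'] E; try discriminate E; [reflexivity |].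
  injection E as Exy E. now rewrite (Hf _ _ Exy), (IH l' E).
Qed.

Lemma tolist_castL {C D : catpres} (Q : uncurr C D) {c c' : Sort C} (H : c = c') {d : Sort D}
  (p : tpath (usig Q) (LS c) (RS d)) : tolist (castL Q H p) = tolist p.
Proof. now destruct H. Qed.

Lemma emb_inj {C D : catpres} (Q : uncurr C D) {c : Sort C} {d : Sort D} (t t' : Pterm Q c d) :
  emb Q t = emb Q t' -> t = t'.
Proof.
  destruct t as [[x Hx] g], t' as [[x' Hx'] g']. cbn [proj1_sig] in g, g'. intro H.
  apply (f_equal tolist) in H.
  change (tolist (castL Q Hx (tcons (S := usig Q) (SP x) (liftD g)))
          = tolist (castL Q Hx' (tcons (S := usig Q) (SP x') (liftD g')))) in H.
  rewrite !tolist_castL in H. simpl in H.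
  injection H as <- Hg.
  assert (Hl : map (SD (C := C) (X := UFun Q)) (tolist g) = map SD (tolist g')).
  { rewrite <- !(tolist_liftD (C := C) (X := UFun Q) (xs := usrc Q) (xt := utgt Q)). exact Hg. }
  apply map_inj in Hl; [| now injection 1].
  apply tolist_inj in Hl. subst g'. now rewrite (proof_irrelevance _ Hx Hx').
Qed.


Lemma Pbar_finite {C D : catpres} (P : curr C D) :
  finite_catpres C -> fin_curr P -> fin_uncurr (Pbar P).
Proof.
  intros [HCs [HCf _]] HP. split.
  - apply finite_sigT; [exact HCs | intro c; apply HP].
  - apply (finite_surj ({c : Sort C & IEqn (Pc P c)} + {f : Fun C & IGen (Pc P (tgt C f))}) _
      (fun s => match s with inl (existT _ c e) => UEI c e | inr (existT _ f p) => UEA f p end)).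
    + apply finite_sum; apply finite_sigT; auto; intro; apply HP.
    + intros [c e|f p]; [exists (inl (existT _ c e)) | exists (inr (existT _ f p))]; reflexivity.
Qed.

Lemma curried_finite {C D : catpres} (Q : uncurr C D) (NG : nongenerative Q) :
  fin_uncurr Q -> fin_curr (curried Q NG).
Proof.
  intros [HF HE] c. split.
  - now apply finite_sig.
  - apply finite_sigT; [exact HE |]. intro e. apply finite_subsingleton.
    intros [H [tl [tr Hp]]] [H' [tl' [tr' Hp']]].
    destruct (proof_irrelevance _ H H').
    assert (tl = tl') as <- by (apply emb_inj; now rewrite (proj1 Hp), (proj1 Hp')).
    assert (tr = tr') as <- by (apply emb_inj; now rewrite (proj2 Hp), (proj2 Hp')).
    now rewrite (proof_irrelevance _ Hp Hp').
Qed.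

Theorem mainTheorem15 (C D : catpres) :
  (* uncurrying lands in curryable presentations ... *)
  (forall P : curr C D, curr_valid P -> curryable (Pbar P)) /\
  (* ... and valid rightward morphisms *)
  (forall (P P' : curr C D) (F : currmor P P'),
     curr_valid P -> curr_valid P' -> currmor_valid F ->
     umor_valid (Fbar F) /\ rightward (Fbar F)) /\
  (* functoriality (up to provable equality) *)
  (forall P : curr C D, curr_valid P ->
     umor_eqv (Fbar (currmor_id P)) (umor_id (Pbar P))) /\
  (forall (P P' P'' : curr C D) (F : currmor P P') (G : currmor P' P''),
     curr_valid P -> curr_valid P' -> curr_valid P'' ->
     currmor_valid F -> currmor_valid G ->
     umor_eqv (Fbar (currmor_comp G F)) (umor_comp (Fbar G) (Fbar F))) /\
  (* preserves and reflects provable equality of morphisms (faithful) *)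
  (forall (P P' : curr C D) (F G : currmor P P'),
     curr_valid P -> curr_valid P' -> currmor_valid F -> currmor_valid G ->
     (currmor_eqv F G <-> umor_eqv (Fbar F) (Fbar G))) /\
  (* full onto Crble(C,D) *)
  (forall (P P' : curr C D) (H : umor (Pbar P) (Pbar P')),
     curr_valid P -> curr_valid P' -> umor_valid H -> rightward H ->
     exists F : currmor P P', currmor_valid F /\ umor_eqv (Fbar F) H) /\
  (* essentially surjective onto Crble(C,D) *)
  (forall Q : uncurr C D, curryable Q ->
     exists P : curr C D, curr_valid P /\ crble_iso Q (Pbar P)) /\
  (* finite case: FinCurr(C,D) -> FinCrble(C,D) is an equivalence *)
  (finite_catpres C -> finite_catpres D ->
     (forall P : curr C D, curr_valid P -> fin_curr P -> fin_uncurr (Pbar P)) /\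
     (forall Q : uncurr C D, curryable Q -> fin_uncurr Q ->
        exists P : curr C D, curr_valid P /\ fin_curr P /\ crble_iso Q (Pbar P))).
Proof.
  split; [| split; [| split; [| split; [| split; [| split; [| split]]]]]].
  - intros P HP. exact (conj (Pbar_nongenerative P) (Pbar_conservative P HP)).
  - intros P P' F _ _ HF. exact (conj (Fbar_valid F HF) (Fbar_rightward F)).
  - intros P _. apply Fbar_id.
  - intros. apply Fbar_comp.
  - intros P P' F G _ HP' _ _. exact (Fbar_eqv F G HP').
  - intros P P' H _ HP' HV _. exists (unFbar H). exact (Fbar_full H HP' HV).
  - intros Q [NG CV]. exists (curried Q NG).
    exact (conj (curried_valid Q NG CV) (curryable_iso_Pbar_curried Q NG CV)).
  - intros HC _. split.
    + intros P _ HP. exact (Pbar_finite P HC HP).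
    + intros Q [NG CV] HQ. exists (curried Q NG).
      exact (conj (curried_valid Q NG CV)
               (conj (curried_finite Q NG HQ) (curryable_iso_Pbar_curried Q NG CV))).
Qed.
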